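(* Let $A,B>0$, $Q=A/B$, $rec$ real, $\epsilon_0 = 1-B\cdot rec$, let $k\ge1$ and let $n_i,d_i,f_i$ be real numbers. Define $N_0 = A\cdot rec - n_0$, $D_0 = B\cdot rec - d_0$, $F_i = 2-D_i-f_i$, and for $i\ge1$: $N_i = N_{i-1}F_{i-1}-n_i$, $D_i = D_{i-1}F_{i-1}-d_i$. Define $\epsilon'_0 = \epsilon_0+d_0$ and $\epsilon'_i = (\epsilon'_{i-1})^2 + (1-\epsilon'_{i-1})f_{i-1} + d_i$ for $i\ge1$. Then for all $i\ge0$, $D_i = 1-\epsilon'_i$, $F_i = 1+\epsilon'_i - f_i$, and $$N_i = Q(1-\epsilon'_i) + \sum_{j=0}^{i}(Qd_j - n_j)\prod_{l=j}^{i-1}F_l .$$ In particular the final numerator satisfies $$N_k = Q\bigl(1-(\epsilon'_{k-1})^2\bigr) - Qf_{k-1}(1-\epsilon'_{k-1}) + \sum_{j=0}^{k-1}(Qd_j-n_j)\prod_{l=j}^{k-1}F_l \;-\; n_k,$$ so that $N_k - Q$ equals the convergent error term $-Q(\epsilon'_{k-1})^2$ plus the accumulative error term $\sum_{j=0}^{k-1}(Qd_j-n_j)\prod_{l=j}^{k-1}F_l - n_k - Qf_{k-1}(1-\epsilon'_{k-1})$. (Empty products equal $1$.)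
   Context: Goldschmidt division of $Q=A/B$ with $k$ iterations in which numerator, denominator and iterative factor are all computed inexactly: $n_i$, $d_i$, $f_i$ are the errors (truncation errors, nonnegative in the paper) on $N_i$, $D_i$, $F_i$ respectively, and $rec$ is an approximate reciprocal of $B$ with relative error $\epsilon_0$. *)

From mathcomp Require Import all_boot all_order all_algebra.
Set Implicit Arguments. Unset Strict Implicit. Unset Printing Implicit Defensive.
Import Order.TTheory GRing.Theory Num.Theory.
Local Open Scope ring_scope.

(* Goldschmidt division with inexact numerator/denominator/factor.
   n, d, f : nat -> R are the errors n_i, d_i, f_i on N_i, D_i, F_i. *)
Section Goldschmidt.
Variables (R : realFieldType) (A B rec : R) (n d f : nat -> R).

Fixpoint gs_D (i : nat) : R :=
  match i with
  | 0 => B * rec - d 0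
  | i'.+1 => gs_D i' * (2 - gs_D i' - f i') - d i
  end.

Definition gs_F (i : nat) : R := 2 - gs_D i - f i.

Fixpoint gs_N (i : nat) : R :=
  match i with
  | 0 => A * rec - n 0
  | i'.+1 => gs_N i' * gs_F i' - n i
  end.

Definition gs_eps0 : R := 1 - B * rec.

Fixpoint gs_epsp (i : nat) : R :=
  match i with
  | 0 => gs_eps0 + d 0
  | i'.+1 => gs_epsp i' ^+ 2 + (1 - gs_epsp i') * f i' + d i
  end.

End Goldschmidt.

From mathcomp Require Import all_boot all_order all_algebra.
From mathcomp Require Import ring.
Import Order.TTheory GRing.Theory Num.Theory.
Local Open Scope ring_scope.

(* The proof is a pair of inductions on the iteration index i.
   - The denominator is tracked exactly by the accumulated error e'_i:
     D_i = 1 - e'_i, hence F_i = 2 - D_i - f_i = 1 + e'_i - f_i.  The step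
     D_{i+1} = (1 - e')(1 + e' - f) - d = 1 - (e'^2 + (1 - e') f + d) is
     precisely the recurrence defining e'_{i+1}.
   - The numerator satisfies N_i = Q D_i + S_i, where S_i is the weighted
     sum of the injected errors Q d_j - n_j, each propagated through the
     factors F_j ... F_{i-1}.  The invariant N_i - Q D_i = S_i holds at
     i = 0 because Q B rec = A rec, and is preserved because both N and
     Q D are multiplied by F_i and shifted by n_{i+1}, resp. Q d_{i+1};
     the bookkeeping for S_i is the recurrence S_{i+1} = S_i F_i + c_{i+1}
     proved first for arbitrary sequences. *)

(* Error-propagation sums: multiplying by F_i extends every product by one
   factor, and the next step only adds the fresh error term (empty product). *)
Section PropagatedSums.
Variables (R : pzSemiRingType) (c F : nat -> R).

Lemma propagated_sum_mulr (i : nat) :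
  \sum_(0 <= j < i.+1) c j * \prod_(j <= l < i.+1) F l
  = (\sum_(0 <= j < i.+1) c j * \prod_(j <= l < i) F l) * F i.
Proof.
rewrite big_distrl /=; apply: eq_big_nat => j /andP [_ le_ji].
by rewrite big_nat_recr //= mulrA.
Qed.

Lemma propagated_sum_recr (i : nat) :
  \sum_(0 <= j < i.+2) c j * \prod_(j <= l < i.+1) F l
  = (\sum_(0 <= j < i.+1) c j * \prod_(j <= l < i) F l) * F i + c i.+1.
Proof. by rewrite big_nat_recr //= propagated_sum_mulr big_geq // mulr1. Qed.

End PropagatedSums.

Section GoldschmidtErrors.
Variables (R : realFieldType) (A B rec : R) (n d f : nat -> R).

Local Notation Q := (A / B).
Local Notation D := (gs_D B rec d f).
Local Notation F := (gs_F B rec d f).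
Local Notation N := (gs_N A B rec n d f).
Local Notation e := (gs_epsp B rec d f).

Lemma gs_D_epsp (i : nat) : D i = 1 - e i.
Proof.
elim: i => [|i IH] /=; first by rewrite /gs_eps0; ring.
by rewrite IH; ring.
Qed.

Lemma gs_F_epsp (i : nat) : F i = 1 + e i - f i.
Proof. by rewrite /gs_F gs_D_epsp; ring. Qed.

(* The numerator equals Q D_i plus the propagated errors Q d_j - n_j;
   only B != 0 is needed, so that Q B = A. *)
Lemma gs_N_epsp (B_neq0 : B != 0) (i : nat) :
  N i = Q * (1 - e i)
        + \sum_(0 <= j < i.+1) (Q * d j - n j) * \prod_(j <= l < i) F l.
Proof.
have QB : Q * B = A by rewrite divfK.
elim: i => [|i IH].
  by rewrite big_nat1 big_geq //= /gs_eps0 -[in LHS]QB; ring.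
rewrite propagated_sum_recr /= IH gs_F_epsp; ring.
Qed.

Lemma gs_N_next (B_neq0 : B != 0) (i : nat) :
  N i.+1 = Q * (1 - e i ^+ 2) - Q * f i * (1 - e i)
           + \sum_(0 <= j < i.+1) (Q * d j - n j) * \prod_(j <= l < i.+1) F l
           - n i.+1.
Proof.
rewrite /= (gs_N_epsp B_neq0) propagated_sum_mulr gs_F_epsp; ring.
Qed.

End GoldschmidtErrors.

Theorem mainTheorem6 (R : realFieldType) (A B rec : R) (n d f : nat -> R)
    (k : nat) (hA : 0 < A) (hB : 0 < B) (hk : (1 <= k)%N) :
  let Q := A / B in
  let D := gs_D B rec d f in
  let F := gs_F B rec d f in
  let N := gs_N A B rec n d f in
  let e := gs_epsp B rec d f in
  (forall i : nat,
      D i = 1 - e i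
   /\ F i = 1 + e i - f i
   /\ N i = Q * (1 - e i)
            + \sum_(0 <= j < i.+1) (Q * d j - n j) * \prod_(j <= l < i) F l)
  /\ N k = Q * (1 - e k.-1 ^+ 2) - Q * f k.-1 * (1 - e k.-1)
           + \sum_(0 <= j < k) (Q * d j - n j) * \prod_(j <= l < k) F l
           - n k
  /\ N k - Q = - Q * e k.-1 ^+ 2
           + (\sum_(0 <= j < k) (Q * d j - n j) * \prod_(j <= l < k) F l
              - n k - Q * f k.-1 * (1 - e k.-1)).
Proof.
move=> Q D F N e.
have B_neq0 : B != 0 by rewrite gt_eqF.
split.
  by move=> i; split; [|split]; [exact: gs_D_epsp | exact: gs_F_epsp
                               | exact: gs_N_epsp].
case: k hk => [//|m] _.
rewrite /N gs_N_next //=; split=> //.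
by rewrite /Q /e; ring.
Qed.
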